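(* Let $G$ be an \{ISK4,wheel\}-free trigraph. Then $G$ admits a clique-cutset or a stable 2-cutset if and only if $G$ admits a good cut-partition.
   Context: A trigraph $G$ consists of a finite vertex set $V(G)$ and an adjacency function $\theta_G:\binom{V(G)}{2}\to\{-1,0,1\}$; for distinct $u,v$ write $uv$ for $\{u,v\}$. The pair $uv$ is strongly adjacent if $\theta_G(uv)=1$, semi-adjacent if $\theta_G(uv)=0$, strongly anti-adjacent if $\theta_G(uv)=-1$; $u,v$ are adjacent if $\theta_G(uv)\ge 0$ and anti-adjacent if $\theta_G(uv)\le 0$. For $X\subseteq V(G)$, $G[X]$ is the trigraph on $X$ with the restricted adjacency function, and $G\setminus X=G[V(G)\setminus X]$. A realization of $G$ is a graph on $V(G)$ obtained by turning each semi-adjacent pair into either an edge or a non-edge (strongly adjacent pairs are edges, strongly anti-adjacent pairs non-edges); the full realization turns all semi-adjacent pairs into edges. A stable set is a set of pairwise anti-adjacent vertices; a strong clique is a set of pairwise strongly adjacent vertices. $G$ is connected if its full realization is connected. A narrow path in $G$ between $a$ and $b$ is an induced subtrigraph whose full realization is a path with endpoints $a$ and $b$. An ISK4 is a graph isomorphic to a subdivision of $K_4$. A wheel is a graph consisting of a chordless cycle of length at least four together with a vertex having at least three neighbors on the cycle. A trigraph is \{ISK4,wheel\}-free if none of its realizations has an induced subgraph that is an ISK4 or a wheel. A cut-partition of $G$ is a partition $(A,B,C)$ of $V(G)$ with $A,B$ non-empty ($C$ possibly empty) such that every vertex of $A$ is strongly anti-adjacent to every vertex of $B$. A clique-cutset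 is a (possibly empty) strong clique $C$ with $G\setminus C$ disconnected; a stable 2-cutset is a stable set $C$ of size two with $G\setminus C$ disconnected. A good cut-partition is a cut-partition $(A,B,C)$ such that either $C$ is a clique-cutset with $|C|\le 3$ (type clique), or $C$ is a stable 2-cutset and each of $G[A\cup C]$ and $G[B\cup C]$ contains a narrow path between the two vertices of $C$ (type stable). *)

From mathcomp Require Import all_boot.
Set Implicit Arguments. Unset Strict Implicit. Unset Printing Implicit Defensive.

(** Adjacency values: Strong = 1, Semi = 0, Anti = -1. *)
Inductive adj3 := Strong | Semi | Anti.

(** A trigraph on a finite vertex type; the value of [theta v v] is irrelevant
    (never used): only pairs of distinct vertices matter. *)
Record trigraph := Trigraph {
  tvert : finType;
  theta : tvert -> tvert -> adj3;
  theta_sym : forall u v, theta u v = theta v u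
}.

Section Seqs.
Variable V : eqType.

Definition consec (s : seq V) (u v : V) : Prop :=
  exists n, n.+1 < size s /\ nth u s n = u /\ nth u s n.+1 = v.

Definition path_seq (s : seq V) (a b : V) : Prop :=
  [/\ uniq s, head a s = a, last a s = b & 1 <= size s].

End Seqs.

Section Trigraphs.
Variable G : trigraph.
Local Notation V := (tvert G).

Definition strongly_adjacent (u v : V) := u <> v /\ theta u v = Strong.
Definition anti_adjacent (u v : V) := u <> v /\ theta u v <> Strong.
Definition strongly_antiadjacent (u v : V) := u <> v /\ theta u v = Anti.

(** Edge relation of the full realization. *)
Definition fullE (u v : V) : bool :=
  (u != v) && (match theta u v with Anti => false | _ => true end).

Definition connected_on (X : {set V}) : Prop :=
  forall u v, u \in X -> v \in X ->
    connect (fun x y => [&& x \in X, y \in X & fullE x y]) u v.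

Definition disconnected_after (C : {set V}) : Prop := ~ connected_on (~: C).

Definition strong_clique (C : {set V}) : Prop :=
  forall u v, u \in C -> v \in C -> u <> v -> strongly_adjacent u v.

Definition stable_set (C : {set V}) : Prop :=
  forall u v, u \in C -> v \in C -> u <> v -> anti_adjacent u v.

Definition clique_cutset (C : {set V}) : Prop :=
  strong_clique C /\ disconnected_after C.

Definition stable_2cutset (C : {set V}) : Prop :=
  stable_set C /\ #|C| = 2 /\ disconnected_after C.

(** A narrow path between [a] and [b] inside G[X]: an induced subtrigraph whose
    full realization is a path with endpoints [a], [b]. *)
Definition narrow_path_in (X : {set V}) (a b : V) : Prop :=
  exists s : seq V, path_seq s a b /\ {subset s <= X} /\
    forall u v, u \in s -> v \in s -> u != v ->
      (fullE u v <-> consec s u v \/ consec s v u).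

Definition cut_partition (A B C : {set V}) : Prop :=
  [/\ [disjoint A & B] /\ [disjoint A & C] /\ [disjoint B & C],
      A :|: B :|: C = setT, A != set0, B != set0 &
      forall a b, a \in A -> b \in B -> strongly_antiadjacent a b].

Definition good_cut_partition (A B C : {set V}) : Prop :=
  cut_partition A B C /\
  ((clique_cutset C /\ #|C| <= 3) \/
   (stable_2cutset C /\
    exists a b, a != b /\ C = [set a; b] /\
      narrow_path_in (A :|: C) a b /\ narrow_path_in (B :|: C) a b)).

Definition realization (R : rel V) : Prop :=
  [/\ forall u v, R u v = R v u,
      forall u, ~~ R u u,
      forall u v, u != v -> theta u v = Strong -> R u v &
      forall u v, u != v -> theta u v = Anti -> ~~ R u v].

End Trigraphs.

Section Graphs.
Variable V : finType.
Variable R : rel V.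

(** The graph R has an induced subgraph that is a subdivision of K4:
    branch vertices [br i] (i < 4), and for each i < j a path [p i j] from
    [br i] to [br j]; distinct paths meet only in branch vertices, each path
    contains no branch vertex other than its ends, and the edges of R among the
    vertices of these paths are exactly the path edges. *)
Definition has_induced_isk4 : Prop :=
  exists (br : 'I_4 -> V) (p : 'I_4 -> 'I_4 -> seq V),
    [/\ injective br,
        forall i j : 'I_4, i < j -> path_seq (p i j) (br i) (br j) /\ 2 <= size (p i j),
        forall i j m : 'I_4, i < j -> br m \in p i j -> m = i \/ m = j,
        forall (i j k l : 'I_4) x, i < j -> k < l -> (i, j) <> (k, l) ->
          x \in p i j -> x \in p k l -> exists m, x = br m &
        forall u v, (exists i j : 'I_4, i < j /\ u \in p i j) ->
                    (exists i j : 'I_4, i < j /\ v \in p i j) ->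
          (R u v <-> exists i j : 'I_4, i < j /\ (consec (p i j) u v \/ consec (p i j) v u))].

Definition hole (s : seq V) (x0 : V) : Prop :=
  [/\ uniq s, 4 <= size s &
      forall i j, i < size s -> j < size s -> i != j ->
        (R (nth x0 s i) (nth x0 s j) <->
           (j == i.+1 %% size s) || (i == j.+1 %% size s))].

Definition has_induced_wheel : Prop :=
  exists (x : V) (s : seq V), hole s x /\ x \notin s /\ 3 <= count (R x) s.

End Graphs.

Definition ISK4_wheel_free (G : trigraph) : Prop :=
  forall R : rel (tvert G), realization R ->
    ~ has_induced_isk4 R /\ ~ has_induced_wheel R.

From mathcomp Require Import all_boot.
Set Implicit Arguments. Unset Strict Implicit. Unset Printing Implicit Defensive.

(* A clique-cutset of an {ISK4,wheel}-free trigraph has at most three vertices,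
   since four pairwise strongly adjacent vertices induce a K4 in the full
   realization (this is the only use of the hypothesis); so a component of
   [G \ C] and the rest of [G \ C] form a good cut-partition. For a stable
   2-cutset [{a, b}], a component of [G \ {a, b}] that has no neighbour of [a]
   is cut off by [b] alone, which gives a good cut-partition of clique type.
   Otherwise the components on both sides of the cut see both [a] and [b], so
   each side contains a walk from [a] to [b], and shortcutting it yields an
   induced, hence narrow, path. *)

Section InducedK4.
Variables (T : finType) (R : rel T).

Lemma consec_pair (x y u v : T) : consec [:: x; y] u v -> x = u /\ y = v.
Proof. by case=> [[|[|n]]] [//= hn [-> ->]]. Qed.

Lemma K4_has_induced_isk4 (br : 'I_4 -> T) :
  irreflexive R -> injective br -> (forall i j, i != j -> R (br i) (br j)) ->
  has_induced_isk4 R.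
Proof.
move=> R_irr br_inj R_br.
have br_neq (i j : 'I_4) : i < j -> br i != br j.
  by move=> lt_ij; rewrite (inj_eq br_inj) neq_ltn lt_ij.
have in_br u (i j : 'I_4) : u \in [:: br i; br j] -> exists m, u = br m.
  by rewrite !inE => /orP [] /eqP ->; eexists.
exists br, (fun i j => [:: br i; br j]); split => //.
- by move=> i j lt_ij; split=> //; split=> //=; rewrite inE andbT br_neq.
- by move=> i j m _; rewrite !inE => /orP [] /eqP /br_inj ->; [left|right].
- by move=> i j k l x _ _ _ /in_br.
move=> u v [i [j [_ /in_br [mu ->]]]] [k [l [_ /in_br [mv ->]]]]; split.
- case: (ltngtP mu mv) => [lt_uv|lt_vu|/val_inj ->]; last by rewrite R_irr.
  + by exists mu, mv; split=> //; left; exists 0.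
  + by exists mv, mu; split=> //; right; exists 0.
- move=> [i' [j' [lt_ij [/consec_pair [<- <-]|/consec_pair [<- <-]]]]].
  + by apply: R_br; rewrite neq_ltn lt_ij.
  + by apply: R_br; rewrite neq_ltn lt_ij orbT.
Qed.

End InducedK4.

Lemma has_split_last (T : eqType) (P : pred T) (s : seq T) : has P s ->
  exists s1 y s2, [/\ s = s1 ++ y :: s2, P y & ~~ has P s2].
Proof.
elim: s => [//|x s IH] /=; case hs: (has P s).
- by move=> _; have [s1 [y [s2 [-> Py nP]]]] := IH hs; exists (x :: s1), y, s2.
- by rewrite orbF => Px; exists [::], x, s; rewrite hs.
Qed.

Section Trigraph.
Variable G : trigraph.
Local Notation V := (tvert G).

Lemma fullE_sym (u v : V) : fullE u v = fullE v u.
Proof. by rewrite /fullE eq_sym theta_sym. Qed.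

Lemma fullE_irr : irreflexive (@fullE G).
Proof. by move=> u; rewrite /fullE eqxx. Qed.

Lemma fullE_realization : realization (@fullE G).
Proof.
split=> [||u v neq_uv theta_uv|u v neq_uv theta_uv].
- exact: fullE_sym.
- by move=> u; rewrite fullE_irr.
- by rewrite /fullE neq_uv theta_uv.
- by rewrite /fullE neq_uv theta_uv.
Qed.

Lemma theta_Anti (u v : V) : u != v -> ~~ fullE u v -> theta u v = Anti.
Proof. by rewrite /fullE => -> /=; case: (theta u v). Qed.

Lemma strong_clique_card_le3 (C : {set V}) :
  ISK4_wheel_free G -> strong_clique C -> #|C| <= 3.
Proof.
move=> free clC; rewrite leqNgt; apply/negP => gt3C.
apply: (proj1 (free _ fullE_realization)).
pose br (i : 'I_4) : V := enum_val (widen_ord gt3C i).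
have br_inj : injective br.
  by move=> i j /enum_val_inj eq_ij; apply/val_inj; exact: (congr1 val eq_ij).
apply: (K4_has_induced_isk4 fullE_irr br_inj) => i j neq_ij.
have neq_br : br i != br j by rewrite (inj_eq br_inj).
have [_ theta_br] := clC _ _ (enum_valP _) (enum_valP _) (elimN eqP neq_br).
by rewrite /fullE neq_br /br theta_br.
Qed.

Definition fullE_in (X : {set V}) : rel V :=
  fun x y => [&& x \in X, y \in X & fullE x y].

Lemma connect_fullE_in_sym (X : {set V}) : connect_sym (fullE_in X).
Proof.
by apply: sym_connect_sym => x y; rewrite /fullE_in fullE_sym andbCA.
Qed.

Lemma connect_fullE_in_subset (X Y : {set V}) (x y : V) :
  X \subset Y -> connect (fullE_in X) x y -> connect (fullE_in Y) x y.
Proof.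
move=> /subsetP sXY; apply: connect_sub => u v /and3P [Xu Xv uv].
by apply: connect1; rewrite /fullE_in !sXY.
Qed.

Lemma disconnected_after_witness (C : {set V}) : disconnected_after C ->
  exists u v, [/\ u \notin C, v \notin C & ~~ connect (fullE_in (~: C)) u v].
Proof.
move=> disC.
case: (boolP [forall u in ~: C, forall v in ~: C, connect (fullE_in (~: C)) u v]).
  by move=> /forall_inP conn; case: disC => u v /conn /forall_inP; apply.
move=> /forall_inPn [u Cu /forall_inPn [v Cv nconn]].
by exists u, v; rewrite -!in_setC.
Qed.

Fixpoint induced_path (s : seq V) : bool :=
  if s is x :: t then
    if t is y :: t' then
      [&& fullE x y, x \notin t, ~~ has (fullE x) t' & induced_path t]
    else true
  else false.

Lemma consec_cons2 (x y : V) s u v :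
  consec [:: x, y & s] u v <-> (x = u /\ y = v) \/ consec (y :: s) u v.
Proof.
split.
- by case=> [[|n] [hn [xu yv]]]; [left | right; exists n].
- case=> [[<- <-]|[n [hn [h1 h2]]]]; first by exists 0.
  by exists n.+1.
Qed.

Lemma consec_mem s (u v : V) : consec s u v -> u \in s /\ v \in s.
Proof. by case=> n [hn [<- <-]]; rewrite !mem_nth // ltnW. Qed.

Lemma induced_path_head x y t (v : V) :
  induced_path [:: x, y & t] -> v \in y :: t ->
  (fullE x v <-> v = y) /\
  (consec [:: x, y & t] x v \/ consec [:: x, y & t] v x <-> v = y).
Proof.
move=> /= /and4P [xy xt nxt _] v_yt.
have neq_xv : x != v by apply: contraNneq xt => ->.
split; split => [|-> //]; last by left; apply/consec_cons2; left.
- move=> xv; move: v_yt; rewrite inE => /orP [/eqP //|vt].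
  by move/hasPn: nxt => /(_ v vt); rewrite xv.
- case=> [/consec_cons2 [[_ -> //]|/consec_mem [xin _]]|
          /consec_cons2 [[vx _]|/consec_mem [_ xin]]].
  + by rewrite xin in xt.
  + by rewrite vx eqxx in neq_xv.
  + by rewrite xin in xt.
Qed.

Lemma induced_path_narrow s : induced_path s ->
  uniq s /\ forall u v, u \in s -> v \in s -> u != v ->
    (fullE u v <-> consec s u v \/ consec s v u).
Proof.
elim: s => [//|x [|y t] IH ind].
  by split => // u v; rewrite !inE => /eqP -> /eqP ->; rewrite eqxx.
have /= /and4P [_ xt _ ind_t] := ind.
have [uniq_t adj_t] := IH ind_t.
split; first by rewrite /= xt.
move=> u v; rewrite (in_cons x (y :: t)) (in_cons x (y :: t)).
case/orP => [/eqP ->|ut]; case/orP => [/eqP ->|vt].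
- by rewrite eqxx.
- by move=> _; have := induced_path_head ind vt; tauto.
- by move=> _; rewrite fullE_sym; have := induced_path_head ind ut; tauto.
have drop_x p q : p \in y :: t -> consec [:: x, y & t] p q -> consec (y :: t) p q.
  by move=> pt /consec_cons2 [[xp _]|//]; rewrite xp pt in xt.
move=> neq_uv; apply: iff_trans (adj_t u v ut vt neq_uv) _; split.
  by case=> h; [left|right]; apply/consec_cons2; right.
by case=> [/(drop_x u v ut)|/(drop_x v u vt)]; [left|right].
Qed.

Lemma induced_path_suffix (s t : seq V) :
  induced_path (s ++ t) -> t != [::] -> induced_path t.
Proof.
elim: s => [//|x s IH] /= ind nt; apply: IH => //.
by case: s ind => [|y s] /=; case: t nt => [|z t] //= _ /and4P [].
Qed.

(* Every walk from [a] can be shortcut to an induced path with the same ends: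
   cut it at the last visit of [a], or else after the last neighbour of [a]. *)
Lemma walk_shortcut (X : {set V}) (a : V) p : a \in X -> path (fullE_in X) a p ->
  exists s, [/\ induced_path (a :: s), last a s = last a p & {subset a :: s <= X}].
Proof.
elim: p a => [|x p IH] a Xa.
  by move=> _; exists [::]; split => // z; rewrite inE => /eqP ->.
move=> /andP [/and3P [_ Xx ax] walk_p].
have [s [ind_s last_s sub_s]] := IH x Xx walk_p.
have last_split s1 y s2 : x :: s = s1 ++ y :: s2 -> last y s2 = last x p.
  by move=> e; rewrite -last_s -[last x s]/(last x (x :: s)) e last_cat.
have sub_split s1 y s2 : x :: s = s1 ++ y :: s2 -> {subset y :: s2 <= X}.
  by move=> e z z_s2; apply: sub_s; rewrite e mem_cat z_s2 orbT.
case a_s: (a \in x :: s).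
  case/splitPr: a_s ind_s sub_s last_split sub_split => s1 s2 ind _ lastE subE.
  exists s2; split.
  - exact: (@induced_path_suffix s1 (a :: s2) ind).
  - exact: (lastE s1 a s2 (erefl _)).
  - exact: (subE s1 a s2 (erefl _)).
have [s1 [y [s2 [e ay na]]]] : exists s1 y s2,
    [/\ x :: s = s1 ++ y :: s2, fullE a y & ~~ has (fullE a) s2].
  by apply: has_split_last; rewrite /= ax.
exists (y :: s2); split; last 2 first.
- exact: (last_split _ _ _ e).
- by move=> z; rewrite inE => /orP [/eqP -> //|]; apply: (sub_split _ _ _ e).
have ind_y : induced_path (y :: s2) by apply: (@induced_path_suffix s1); rewrite -?e.
have a_ys2 : a \notin y :: s2.
  by apply: contraFN a_s => a_ys2; rewrite e mem_cat a_ys2 orbT.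
by apply/and4P; split.
Qed.

Lemma narrow_path_of_connect (X : {set V}) (a b : V) :
  a \in X -> connect (fullE_in X) a b -> narrow_path_in X a b.
Proof.
move=> Xa /connectP [p walk_p ->].
have [s [ind <- sub_s]] := walk_shortcut Xa walk_p.
have [uniq_s adj_s] := induced_path_narrow ind.
by exists (a :: s).
Qed.

Lemma narrow_path_in_subset (X Y : {set V}) (a b : V) :
  X \subset Y -> narrow_path_in X a b -> narrow_path_in Y a b.
Proof.
move=> /subsetP sXY [s [ps [sub_s adj_s]]].
by exists s; split=> //; split=> // z /sub_s /sXY.
Qed.

Lemma cut_partition_disconnected (A B C : {set V}) :
  cut_partition A B C -> disconnected_after C.
Proof.
case=> [[dAB [dAC dBC]] cover /set0Pn [x Ax] /set0Pn [y By] antiAB] conn.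
have Cx : x \in ~: C by rewrite inE (disjointFr dAC Ax).
have Cy : y \in ~: C by rewrite inE (disjointFr dBC By).
have stay z q : z \in A -> path (fullE_in (~: C)) z q -> last z q \in A.
  elim: q z => [//|w q IH] z Az /= /andP [/and3P [_ Cw zw] walk_q].
  apply: IH walk_q; have : w \in A :|: B :|: C by rewrite cover inE.
  rewrite !inE; move: Cw; rewrite inE => /negbTE ->; rewrite orbF.
  case/orP => // Bw; have [_ theta_zw] := antiAB z w Az Bw.
  by move: zw; rewrite /fullE theta_zw andbF.
have /connectP [p walk_p ey] := conn x y Cx Cy.
by move: By; rewrite ey (disjointFr dAB (stay x p Ax walk_p)).
Qed.

Lemma clique_cut_partition_good (A B C : {set V}) :
  cut_partition A B C -> strong_clique C -> #|C| <= 3 -> good_cut_partition A B C.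
Proof.
move=> cut clC le3C; split=> //; left; split=> //; split=> //.
exact: cut_partition_disconnected cut.
Qed.

Lemma closed_cut_partition (K C : {set V}) :
  K != set0 -> [disjoint K & C] -> ~: (K :|: C) != set0 ->
  (forall x y, x \in K -> y \notin K :|: C -> ~~ fullE x y) ->
  cut_partition K (~: (K :|: C)) C.
Proof.
move=> nK dKC nB closedK; split => //.
- split; [|split] => //; rewrite disjoints_subset.
  + by rewrite setCK subsetUl.
  + by rewrite setCS subsetUr.
- by apply/setP => x; rewrite !inE; case: (x \in K); case: (x \in C).
move=> x y Kx; rewrite inE => Ky.
have neq_xy : x != y by apply: contraNneq Ky => <-; rewrite inE Kx.
by split; [exact/eqP | apply: theta_Anti neq_xy (closedK x y Kx Ky)].
Qed.

Definition component (C : {set V}) (w : V) : {set V} :=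
  [set z in ~: C | connect (fullE_in (~: C)) w z].

Lemma component_closed (C : {set V}) w z z' :
  z \in component C w -> z' \notin C -> fullE z z' -> z' \in component C w.
Proof.
rewrite !inE => /andP [Cz wz] Cz' zz'; rewrite Cz' /=.
by apply: connect_trans wz (connect1 _); rewrite /fullE_in !inE Cz Cz'.
Qed.

Lemma mem_component (C : {set V}) w : w \notin C -> w \in component C w.
Proof. by rewrite !inE => ->; rewrite connect0. Qed.

Lemma component_path (C : {set V}) w z p : z \in component C w ->
  path (fullE_in (~: C)) z p -> path (fullE_in (component C w)) z p.
Proof.
elim: p z => [//|y p IH] z Kz /andP [/and3P [_ Cy zy] walk_p].
have Ky : y \in component C w by apply: component_closed Kz _ zy; rewrite -in_setC.
by rewrite /= /fullE_in Kz Ky zy IH.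
Qed.

Lemma component_connect (C : {set V}) w z : w \notin C ->
  z \in component C w -> connect (fullE_in (component C w)) w z.
Proof.
move=> Cw; rewrite inE => /andP [_ /connectP [p walk_p ->]].
by apply/connectP; exists p => //; apply: component_path (mem_component Cw) walk_p.
Qed.

Lemma component_cut_partition (C : {set V}) w u :
  w \notin C -> u \notin C -> ~~ connect (fullE_in (~: C)) w u ->
  cut_partition (component C w) (~: (component C w :|: C)) C.
Proof.
move=> Cw Cu nwu; apply: closed_cut_partition.
- by apply/set0Pn; exists w; apply: mem_component.
- by rewrite disjoint_subset; apply/subsetP => z; rewrite !inE => /andP [].
- by apply/set0Pn; exists u; rewrite !inE (negbTE Cu) (negbTE nwu).
move=> x y Kx; rewrite inE negb_or => /andP [Ky Cy].
by apply: contra Ky; apply: component_closed Kx Cy.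
Qed.

Lemma component_disjoint (C : {set V}) u v :
  ~~ connect (fullE_in (~: C)) u v ->
  component C v \subset ~: (component C u :|: C).
Proof.
move=> nuv; apply/subsetP => z; rewrite !inE negb_or => /andP [Cz vz].
rewrite Cz andbT; apply: contra nuv => uz.
by apply: connect_trans uz _; rewrite connect_fullE_in_sym.
Qed.

Section StableCutset.
Variables (a b w : V).
Hypotheses (neq_ab : a != b) (Cw : w \notin [set a; b]).
Local Notation K := (component [set a; b] w).

Lemma unattached_component_good :
  (forall x, x \in K -> ~~ fullE a x) ->
  good_cut_partition K (~: (K :|: [set b])) [set b].
Proof.
move=> na; apply: clique_cut_partition_good; last by rewrite cards1.
  apply: closed_cut_partition.
  - by apply/set0Pn; exists w; apply: mem_component.
  - by rewrite disjoint_sym disjoints1 !inE eqxx orbT.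
  - by apply/set0Pn; exists a; rewrite !inE negb_or eqxx (negbTE neq_ab).
  move=> x y Kx; rewrite !inE negb_or => /andP [Ky neq_yb].
  case: (eqVneq y a) => [->|neq_ya]; first by rewrite fullE_sym na.
  apply: contra Ky => xy; have := component_closed Kx _ xy.
  by rewrite !inE (negbTE neq_ya) (negbTE neq_yb) => /(_ isT) /andP [].
by move=> x y; rewrite !inE => /eqP -> /eqP -> [].
Qed.

Lemma attached_component_narrow x y :
  x \in K -> fullE a x -> y \in K -> fullE b y ->
  narrow_path_in (K :|: [set a; b]) a b.
Proof.
move=> Kx ax Ky yb.
have sub_K : K \subset K :|: [set a; b] by apply: subsetUl.
have Xa : a \in K :|: [set a; b] by rewrite !inE eqxx !orbT.
have Xb : b \in K :|: [set a; b] by rewrite !inE eqxx !orbT.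
have Xx : x \in K :|: [set a; b] by rewrite in_setU Kx.
have Xy : y \in K :|: [set a; b] by rewrite in_setU Ky.
apply: (narrow_path_of_connect Xa).
apply: (@connect_trans _ _ x); first by apply: connect1; rewrite /fullE_in Xa Xx ax.
apply: (@connect_trans _ _ w).
  rewrite connect_fullE_in_sym.
  exact: connect_fullE_in_subset sub_K (component_connect Cw Kx).
apply: (@connect_trans _ _ y).
  exact: connect_fullE_in_subset sub_K (component_connect Cw Ky).
by apply: connect1; rewrite /fullE_in Xy Xb fullE_sym yb.
Qed.

End StableCutset.

Lemma component_good_or_narrow (a b w : V) : a != b -> w \notin [set a; b] ->
  (exists A B C : {set V}, good_cut_partition A B C) \/
  narrow_path_in (component [set a; b] w :|: [set a; b]) a b.
Proof.
move=> neq_ab Cw; set K := component [set a; b] w.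
case: (boolP [exists x in K, fullE a x]) => [/exists_inP [x Kx ax]|/exists_inPn na].
  case: (boolP [exists y in K, fullE b y]) => [/exists_inP [y Ky yb]|/exists_inPn nb].
    by right; apply: attached_component_narrow Kx ax Ky yb.
  have eC : [set a; b] = [set b; a] by apply: setUC.
  left; exists K, (~: (K :|: [set a])), [set a]; rewrite /K eC in nb *.
  by apply: unattached_component_good; [rewrite eq_sym | rewrite -eC |].
by left; exists K, (~: (K :|: [set b])), [set b]; apply: unattached_component_good.
Qed.

Lemma stable_2cutset_good (C : {set V}) : stable_2cutset C ->
  exists A B C' : {set V}, good_cut_partition A B C'.
Proof.
move=> stC; have [_ [cardC disC]] := stC.
have /cards2P [a [b [neq_ab eC]]] : #|C| == 2 by apply/eqP.
have [u [v [Cu Cv nuv]]] := disconnected_after_witness disC.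
rewrite eC in Cu Cv.
case: (component_good_or_narrow neq_ab Cu) => [//|narrow_u].
case: (component_good_or_narrow neq_ab Cv) => [//|narrow_v].
exists (component C u), (~: (component C u :|: C)), C.
split; first by rewrite eC in nuv *; apply: component_cut_partition Cu Cv nuv.
right; split => //; exists a, b; rewrite -eC in narrow_u narrow_v *.
do !split => //; apply: narrow_path_in_subset narrow_v.
by rewrite setSU // component_disjoint.
Qed.

End Trigraph.

Theorem proposition4p2 (G : trigraph) :
  ISK4_wheel_free G ->
  ((exists C : {set tvert G}, clique_cutset C) \/
   (exists C : {set tvert G}, stable_2cutset C)) <->
  (exists A B C : {set tvert G}, good_cut_partition A B C).
Proof.
move=> free; split.
- case=> [[C [clC disC]]|[C stC]]; last exact: stable_2cutset_good stC.
  have [u [v [Cu Cv nuv]]] := disconnected_after_witness disC.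
  exists (component C u), (~: (component C u :|: C)), C.
  apply: clique_cut_partition_good clC (strong_clique_card_le3 free clC).
  exact: component_cut_partition Cu Cv nuv.
- by case=> A [B [C [_ [[clC _]|[stC _]]]]]; [left|right]; exists C.
Qed.
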